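(* In the setting of the context, assume $\frac{\ln 2}{\phi}-d^2\ge0$ and let $\nu=\sqrt{\frac{\ln 2}{\phi}-d^2}$, with $\nu\le D_{\rm L}$. Then $$\mathbb{P}(\Delta_{\rm sum}\ge0)\ge\begin{cases}1-\dfrac{2\nu^2}{D_{\rm L}^2}, & \nu\le\dfrac{D_{\rm L}}{2},\\[2mm] 2\left(1-\dfrac{\nu}{D_{\rm L}}\right)^2, & \dfrac{D_{\rm L}}{2}<\nu\le D_{\rm L}.\end{cases}$$
   Context: Fix constants $D_{\rm L},d,\phi,\rho,\eta>0$. Two users are located at $(x_1,0,0)$ and $(x_2,0,0)$ with $x_1,x_2$ independent, $x_1$ uniform on $[-D_{\rm L}/2,0]$, $x_2$ uniform on $[0,D_{\rm L}/2]$. Let $z=x_2-x_1$, $P=e^{-\phi(z^2+d^2)}$ (probability that an interference LoS link is present) and $S=\rho\eta/d^2$. Each user's (EDMA) rate is $$R=P\log_2\!\left(1+\frac{S}{\frac{\rho\eta}{z^2+d^2}+1}\right)+(1-P)\log_2(1+S),$$ the EDMA sum rate is $R^{\rm EDMA}=2R$, the TDMA sum rate is $R^{\rm TDMA}=\log_2(1+S)$, and $\Delta_{\rm sum}=R^{\rm EDMA}-R^{\rm TDMA}$ (a random variable through $x_1,x_2$). *)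

From HB Require Import structures.
From mathcomp Require Import all_boot all_order all_algebra.
From mathcomp Require Import all_classical all_reals all_analysis.
Set Implicit Arguments. Unset Strict Implicit. Unset Printing Implicit Defensive.
Import Order.TTheory GRing.Theory Num.Theory.
Local Open Scope ring_scope.

Section defs.
Context {R : realType}.

Definition log2 (x : R) : R := ln x / ln 2.

Definition los_prob (phi d x1 x2 : R) : R :=
  expR (- (phi * ((x2 - x1) ^+ 2 + d ^+ 2))).

Definition edma_rate (rho eta phi d x1 x2 : R) : R :=
  let P := los_prob phi d x1 x2 in
  let S := rho * eta / d ^+ 2 in
  P * log2 (1 + S / (rho * eta / ((x2 - x1) ^+ 2 + d ^+ 2) + 1))
  + (1 - P) * log2 (1 + S).

Definition R_EDMA (rho eta phi d x1 x2 : R) : R := 2 * edma_rate rho eta phi d x1 x2.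
Definition R_TDMA (rho eta d : R) : R := log2 (1 + rho * eta / d ^+ 2).
Definition Delta_sum (rho eta phi d x1 x2 : R) : R :=
  R_EDMA rho eta phi d x1 x2 - R_TDMA rho eta d.

Lemma left_lt (DL : R) : 0 < DL -> - (DL / 2) < 0.
Proof. by move=> h; rewrite oppr_lt0 divr_gt0. Qed.
Lemma right_lt (DL : R) : 0 < DL -> 0 < DL / 2.
Proof. by move=> h; rewrite divr_gt0. Qed.

Definition users_law (DL : R) (hDL : 0 < DL) : set (R * R) -> \bar R :=
  (uniform_prob (left_lt hDL) \x uniform_prob (right_lt hDL))%E.

End defs.

From HB Require Import structures.
From mathcomp Require Import all_boot all_order all_algebra.
From mathcomp Require Import all_classical all_reals all_analysis.
From mathcomp Require Import ring lra measurable_realfun.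
Set Implicit Arguments. Unset Strict Implicit. Unset Printing Implicit Defensive.
Import Order.TTheory GRing.Theory Num.Theory.
Local Open Scope ring_scope.
Local Open Scope classical_set_scope.

(* If [x2 - x1 >= nu] then [phi (z^2 + d^2) >= ln 2], i.e. [P <= 1/2], and
   [Delta_sum = 2 P A + (1 - 2 P) B] with [A, B] nonnegative logarithms, so
   [Delta_sum >= 0].  Hence the probability is at least that of
   [x2 >= x1 + nu]; conditioning on [x1], this is the integral over
   [[-D_L/2, 0]] of the tail probability of [x2] uniform on [[0, D_L/2]],
   a clamped affine function of [x1] that integrates piecewise to the two
   bounds. *)

Lemma log2_ge0 {R : realType} (y : R) : 1 <= y -> 0 <= log2 y.
Proof.
by move=> y1; apply: divr_ge0; [exact: ln_ge0 | rewrite ltW// ln_gt0// ltr1n].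
Qed.

Lemma los_prob_le_half {R : realType} (phi d x1 x2 : R) :
  0 < phi -> 0 <= ln 2 / phi - d ^+ 2 ->
  Num.sqrt (ln 2 / phi - d ^+ 2) <= x2 - x1 -> los_prob phi d x1 x2 <= 2^-1.
Proof.
move=> phi0 nu0 hz; rewrite -[2^-1](@lnK R) ?posrE// lnV ?posrE//.
rewrite /los_prob ler_expR lerN2 -ler_pdivrMl// -lerBlDr.
by rewrite mulrC -(sqr_sqrtr nu0) ler_pXn2r ?nnegrE// (le_trans (sqrtr_ge0 _) hz).
Qed.

Lemma Delta_sum_ge0 {R : realType} (d phi rho eta x1 x2 : R) :
  0 < d -> 0 < phi -> 0 < rho -> 0 < eta -> 0 <= ln 2 / phi - d ^+ 2 ->
  Num.sqrt (ln 2 / phi - d ^+ 2) <= x2 - x1 ->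
  0 <= Delta_sum rho eta phi d x1 x2.
Proof.
move=> d0 phi0 rho0 eta0 nu0 hz.
rewrite /Delta_sum /R_EDMA /R_TDMA /edma_rate.
set P := los_prob _ _ _ _; set S := rho * eta / _.
set A := log2 (1 + S / _); set B := log2 (1 + S).
have S0 : 0 <= S by rewrite divr_ge0 ?mulr_ge0 ?ltW.
have A0 : 0 <= A.
  apply/log2_ge0; rewrite lerDl divr_ge0// ltW// ltr_pwDr//.
  rewrite divr_ge0 ?mulr_ge0 ?ltW//.
  by rewrite ltr_pwDr ?exprn_gt0// sqr_ge0.
have B0 : 0 <= B by rewrite log2_ge0// lerDl.
have P0 : 0 <= P by rewrite expR_ge0.
have P_half : 0 <= 1 - 2 * P.
  by rewrite subr_ge0 -ler_pdivlMl// mulr1 los_prob_le_half.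
have -> : 2 * (P * A + (1 - P) * B) - B = 2 * P * A + (1 - 2 * P) * B by ring.
by apply: addr_ge0; apply: mulr_ge0 => //; rewrite mulr_ge0.
Qed.

Lemma integral_affine_itv {R : realType} (u v a b : R) : a <= b ->
  (\int[lebesgue_measure]_(x in `[a, b]) (u * x + v)%:E =
   (u * (b ^+ 2 - a ^+ 2) / 2 + v * (b - a))%:E)%E.
Proof.
rewrite le_eqVlt => /predU1P[<-|ab].
  by rewrite set_itv1 integral_set1 !subrr mulr0 mul0r mulr0 addr0.
pose F x : R := u * x ^+ 2 / 2 + v * x.
have dF (x : R) : is_derive x (1 : R) F (u * x + v).
  by apply: is_derive_eq; rewrite /GRing.scale /=; field.
have cF (x : R) : {for x, continuous (F : R^o -> R^o)}.
  by apply/differentiable_continuous; rewrite -derivable1_diffP; case: (dF x).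
rewrite (@continuous_FTC2 _ _ F)//.
- by congr (_%:E); rewrite /F; field.
- apply: (@continuous_subspaceT R^o R^o) => x.
  by apply/differentiable_continuous; rewrite -derivable1_diffP.
- split; first by move=> x _; case: (dF x).
  + exact: cvg_at_right_filter (cF a).
  + exact: cvg_at_left_filter (cF b).
- by move=> x _; rewrite derive1E derive_val.
Qed.

Section ge0_integral_monotone.
Context d (T : measurableType d) (R : realType) (mu : {measure set T -> \bar R}).
Local Open Scope ereal_scope.

(* No measurability is needed: the integral of a nonnegative function is a
   supremum over the simple functions below it. *)
Lemma ge0_le_integralT (f g : T -> \bar R) :
  (forall x, 0 <= f x) -> (forall x, f x <= g x) ->
  \int[mu]_x f x <= \int[mu]_x g x.
Proof.
move=> f0 fg; have g0 x : 0 <= g x := le_trans (f0 x) (fg x).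
rewrite !ge0_integralTE//; apply: ereal_sup_le => _ [s sf <-].
by exists s => //= x; exact: le_trans (sf x) (fg x).
Qed.

Lemma ge0_le_integral_subset (A B : set T) (f : T -> \bar R) :
  (forall x, 0 <= f x) -> A `<=` B ->
  \int[mu]_(x in A) f x <= \int[mu]_(x in B) f x.
Proof.
move=> f0 AB; rewrite [leLHS]integral_mkcond [leRHS]integral_mkcond.
apply: ge0_le_integralT => x; rewrite !patchE; first by case: ifP.
case: ifPn => [/set_mem/AB/mem_set->//|_]; by case: ifP.
Qed.

End ge0_integral_monotone.

Lemma lebesgue_measure_itv_cc {R : realType} (a b : R) : a <= b ->
  lebesgue_measure (`[a, b] : set R) = (b - a)%:E.
Proof.
move=> ab; rewrite (lebesgue_measure_itv `[a, b]%R) /= lte_fin.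
by case: ltgtP ab => //= -> _; rewrite subrr.
Qed.

Section uniform_prob_lemmas.
Context {R : realType} (a b : R) (ab : a < b).

Lemma uniform_prob_le (A B : set R) :
  A `<=` B -> (uniform_prob ab A <= uniform_prob ab B)%E.
Proof.
move=> AB; apply: ge0_le_integral_subset => // x.
by rewrite lee_fin uniform_pdf_ge0.
Qed.

Lemma uniform_prob_itv (c : R) : a <= c <= b ->
  uniform_prob ab `[c, b] = ((b - c) / (b - a))%:E.
Proof.
move=> /andP[ac cb]; rewrite /uniform_prob integral_uniform_pdf.
have -> : `[c, b] `&` `[a, b] = `[c, b] :> set R.
  apply/seteqP; split => x /=; first by case.
  by rewrite !in_itv/= => /andP[cx ->]; rewrite cx (le_trans ac cx).
rewrite (eq_integral (fun=> ((b - a)^-1)%:E)); last first.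
  move=> x; rewrite inE/= in_itv/= => /andP[cx xb].
  by rewrite /uniform_pdf (le_trans ac cx) xb.
by rewrite integral_cst// [X in (_ * X)%E]lebesgue_measure_itv_cc// -EFinM mulrC.
Qed.

End uniform_prob_lemmas.

Lemma users_law_le {R : realType} (DL : R) (hDL : 0 < DL)
    (A B : set (R * R)) :
  A `<=` B -> (users_law hDL A <= users_law hDL B)%E.
Proof.
move=> AB; apply: ge0_le_integralT => x; first exact: measure_ge0.
by apply: uniform_prob_le => y; rewrite /xsection /= !inE => /AB.
Qed.

Section uniform_tail.
Context {R : realType} (h : R) (h0 : 0 < h).

Definition uniform_tail (c : R) : R := Num.max 0 ((h - Num.max c 0) / h).

Lemma uniform_tail_ge0 c : 0 <= uniform_tail c.
Proof. by rewrite le_max lexx. Qed.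

Lemma uniform_tail_le_prob c :
  ((uniform_tail c)%:E <= uniform_prob h0 [set y | (c <= y)%R])%E.
Proof.
rewrite /uniform_tail; set c' := Num.max c 0.
have c'0 : 0 <= c' by rewrite le_max lexx orbT.
have [c'h|hc'] := leP c' h; last first.
  by rewrite max_l ?measure_ge0// pmulr_lle0 ?invr_gt0// subr_le0 ltW.
rewrite max_r; last by rewrite divr_ge0 ?subr_ge0// ltW.
have := uniform_prob_itv h0 (c := c'); rewrite c'0 c'h subr0 => /(_ isT) <-.
apply: uniform_prob_le => y /=; rewrite in_itv/= => /andP[c'y _].
by rewrite (le_trans _ c'y)// le_max lexx.
Qed.

Lemma measurable_uniform_tail : measurable_fun setT uniform_tail.
Proof.
apply: measurable_maxr => //; apply: measurable_funM => //.
by apply: measurable_funB => //; exact: measurable_maxr.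
Qed.

Lemma uniform_tail_affine c : 0 <= c <= h -> uniform_tail c = (h - c) / h.
Proof.
move=> /andP[c0 ch]; rewrite /uniform_tail (max_l c0) max_r//.
by rewrite divr_ge0 ?subr_ge0// ltW.
Qed.

Lemma uniform_tail_le0 c : c <= 0 -> uniform_tail c = 1.
Proof.
by move=> c0; rewrite /uniform_tail (max_r c0) subr0 divff ?gt_eqF// max_r.
Qed.

End uniform_tail.

Section integral_uniform_tail.
Context {R : realType} (h nu : R) (h0 : 0 < h).
Local Notation mu := (@lebesgue_measure R).

Lemma measurable_uniform_tail_shift :
  measurable_fun setT (fun x : R => uniform_tail h (x + nu)).
Proof.
by apply: measurableT_comp; [exact: measurable_uniform_tail|exact: measurable_funD].
Qed.

Lemma integral_uniform_tail_affine (a b : R) :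
  a <= b -> 0 <= a + nu -> b + nu <= h ->
  (\int[mu]_(x in `[a, b]) (uniform_tail h (x + nu))%:E =
   ((- h^-1) * (b ^+ 2 - a ^+ 2) / 2 + (h - nu) / h * (b - a))%:E)%E.
Proof.
move=> ab a0 bh; rewrite -integral_affine_itv//; apply: eq_integral => x.
rewrite inE/= in_itv/= => /andP[ax xb].
rewrite uniform_tail_affine//; last by apply/andP; split; lra.
by congr (_%:E); field; rewrite gt_eqF.
Qed.

Lemma integral_uniform_tail_small : 0 <= nu <= h ->
  (\int[mu]_(x in `[(- h)%R, 0%R]) (uniform_tail h (x + nu))%:E =
   (h - nu ^+ 2 / (2 * h))%:E)%E.
Proof.
move=> /andP[nu0 nuh].
have mtail : measurable_fun setT (fun x : R => (uniform_tail h (x + nu))%:E).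
  by apply/measurable_EFinP; exact: measurable_uniform_tail_shift.
have -> : `[- h, 0] = `[- h, - nu] `|` `]- nu, 0] :> set R.
  by apply: itv_bndbnd_setU; rewrite bnd_simp; lra.
rewrite ge0_integral_setU//; last 3 first.
- exact: measurable_funTS.
- by move=> x _; rewrite lee_fin uniform_tail_ge0.
- rewrite disj_set2E; apply/eqP/seteqP; split => x //=.
  by rewrite !in_itv/= => -[/andP[_ a] /andP[b _]]; lra.
rewrite integral_itv_obnd_cbnd; last exact: measurable_funTS.
rewrite (@integral_uniform_tail_affine (- nu) 0); [|lra|lra|lra].
rewrite (eq_integral (fun=> 1%:E)); last first.
  move=> x; rewrite inE/= in_itv/= => /andP[_ xnu].
  by rewrite uniform_tail_le0//; lra.
rewrite integral_cst// [X in (_ * X)%E]lebesgue_measure_itv_cc; last lra.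
by rewrite mul1e -EFinD; congr (_%:E); field; rewrite gt_eqF.
Qed.

Lemma integral_uniform_tail_large : h <= nu <= 2 * h ->
  (((2 * h - nu) ^+ 2 / (2 * h))%:E <=
   \int[mu]_(x in `[(- h)%R, 0%R]) (uniform_tail h (x + nu))%:E)%E.
Proof.
move=> /andP[hnu nu2h].
apply: le_trans (ge0_le_integral_subset mu (A := `[- h, h - nu]) _ _);
  last 2 first.
- by move=> x; rewrite lee_fin uniform_tail_ge0.
- by move=> x /=; rewrite !in_itv/= => /andP[-> xb]; lra.
rewrite integral_uniform_tail_affine; [|lra|lra|lra].
by rewrite lee_fin le_eqVlt; apply/predU1l; field; rewrite gt_eqF.
Qed.

End integral_uniform_tail.

Theorem lemma3 (R : realType) (DL d phi rho eta : R)
  (hDL : 0 < DL) (hd : 0 < d) (hphi : 0 < phi) (hrho : 0 < rho) (heta : 0 < eta)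
  (hnu0 : 0 <= ln 2 / phi - d ^+ 2)
  (hnu : Num.sqrt (ln 2 / phi - d ^+ 2) <= DL) :
  let nu := Num.sqrt (ln 2 / phi - d ^+ 2) in
  ((if nu <= DL / 2 then 1 - 2 * nu ^+ 2 / DL ^+ 2
    else 2 * (1 - nu / DL) ^+ 2)%:E
   <= users_law hDL [set x | (0 <= Delta_sum rho eta phi d x.1 x.2)%R])%E.
Proof.
cbv zeta; set nu := Num.sqrt _; have nu0 : 0 <= nu := sqrtr_ge0 _.
set h := DL / 2; have h0 : 0 < h := right_lt hDL.
have DLh : DL = 2 * h by rewrite /h mulrC divfK ?pnatr_eq0.
apply: (le_trans _
  (users_law_le hDL (A := [set x | nu <= x.2 - x.1]) _)); last first.
  by move=> x; exact: Delta_sum_ge0.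
apply: (@le_trans _ _
  (\int[uniform_prob (left_lt hDL)]_x (uniform_tail h (x + nu))%:E)%E); last first.
  apply: ge0_le_integralT => x; first by rewrite lee_fin uniform_tail_ge0.
  apply: le_trans (uniform_tail_le_prob h0 _) _.
  by apply: uniform_prob_le => y; rewrite /xsection /= inE /= lerBrDr addrC.
rewrite integral_uniform; last 2 first.
- by apply/measurable_EFinP; exact: measurable_uniform_tail_shift.
- by move=> x; rewrite lee_fin uniform_tail_ge0.
rewrite sub0r opprK -/h.
have [nuh|hnu'] := leP nu h.
  rewrite integral_uniform_tail_small ?nu0// -EFinM lee_fin DLh.
  by rewrite le_eqVlt; apply/predU1l; field; rewrite gt_eqF.
apply: le_trans (lee_wpmul2l _ (integral_uniform_tail_large h0 _)).
- rewrite -EFinM lee_fin DLh le_eqVlt.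
  by apply/predU1l; field; rewrite gt_eqF.
- by rewrite lee_fin invr_ge0 ltW.
- by rewrite (ltW hnu') -DLh.
Qed.
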